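(* Let $s\ge1$ and let $\mathcal{G}_{2s}\subset GL_{2s}(\mathbb{Z})$ be the group generated by the linear maps $\sigma_1,\dotsc,\sigma_{2s}$ of $\mathbb{Z}^{2s}$ given in coordinates $k=(k_1,\dotsc,k_{2s})$ by \[ \sigma_1:\ k_1\mapsto k_1,\quad k_j\mapsto k_j+k_1\ (j>1); \] \[ \sigma_i\ (2\le i\le 2s):\ k_{i-1}\mapsto 2k_{i-1}-k_i,\quad k_i\mapsto k_{i-1},\quad k_j\mapsto k_j\ (j\ne i-1,i). \] For a nonzero $k\in\mathbb{Z}^{2s}$ put $\gamma=\gcd(k_1,\dotsc,k_{2s})$, $\alpha=\#\{i:\ k_i/\gamma\equiv1\pmod 2\}$ and $\delta=|2\alpha-2s-1|$. Then $\delta$ (and $\gamma$) are invariant under the action of $\mathcal{G}_{2s}$: for every $g\in\mathcal{G}_{2s}$ and every nonzero $k$, the vectors $k$ and $gk$ have the same value of $\delta$. *)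

From mathcomp Require Import all_boot all_order all_algebra.
Set Implicit Arguments. Unset Strict Implicit. Unset Printing Implicit Defensive.
Import Order.TTheory GRing.Theory Num.Theory.
Local Open Scope ring_scope.

(* Vectors k in Z^n are column vectors 'cV[int]_n; coordinate k_j (1-based in
   the paper) is k (j-1) 0 here.  Linear maps are integer matrices acting by
   left multiplication. *)

(* The generator sigma_i (1-based index i, 1 <= i <= n) as an n x n matrix. *)
Definition sigma (n i : nat) : 'M[int]_n :=
  \matrix_(j < n, l < n)
    if i == 1%N then
      (((j == l) : nat) + (((j : nat) != 0%N) && ((l : nat) == 0%N) : nat))%:Z
    else if (j : nat) == (i - 2)%N then
      (if (l : nat) == (i - 2)%N then 2 else if (l : nat) == (i - 1)%N then -1 else 0)
    else if (j : nat) == (i - 1)%N then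
      ((l == (i - 2)%N :> nat) : nat)%:Z
    else ((j == l) : nat)%:Z.

Inductive inG (n : nat) : 'M[int]_n -> Prop :=
| inG1 : inG 1%:M
| inG_mul (i : nat) (g : 'M[int]_n) :
    (1 <= i <= n)%N -> inG g -> inG (sigma n i *m g)
| inG_mulV (i : nat) (g : 'M[int]_n) :
    (1 <= i <= n)%N -> inG g -> inG (invmx (sigma n i) *m g).

Definition gammaV (n : nat) (k : 'cV[int]_n) : int :=
  \big[gcdz/0]_(j < n) k j ord0.

Definition alphaV (n : nat) (k : 'cV[int]_n) : nat :=
  #|[set j : 'I_n | modz (divz (k j ord0) (gammaV k)) 2 == 1]|.

Definition deltaV (n : nat) (k : 'cV[int]_n) : nat :=
  absz ((2 * (alphaV k)%:Z - n%:Z - 1)%R).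

From mathcomp Require Import all_boot all_order all_algebra perm.
From mathcomp Require Import zify.
Import Order.TTheory GRing.Theory Num.Theory.
Set Implicit Arguments. Unset Strict Implicit. Unset Printing Implicit Defensive.
Local Open Scope ring_scope.

(* Both kinds of generators are transvections 1 + u v with v u = 0: sigma_1 with
   u = (0, 1, ..., 1) and v = e_1, sigma_i (i >= 2) with u = e_(i-1) + e_i and
   v = e_(i-1) - e_i.  Hence they are invertible over Z, so every element of the
   group preserves gamma and commutes with dividing k by gamma.  Modulo 2,
   sigma_i (i >= 2) swaps the parities of k_(i-1) and k_i, while sigma_1 changes
   nothing when k_1 / gamma is even and otherwise flips the parity of every other
   coordinate, turning alpha into n + 1 - alpha; both keep |2 alpha - n - 1|. *)

Lemma dvdz_gammaV n d (k : 'cV[int]_n) :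
  (d %| gammaV k)%Z = [forall j, d %| k j ord0]%Z.
Proof.
by rewrite /gammaV (big_morph (fun x => (d %| x)%Z) (dvdz_gcd d) (dvdz0 d)) big_andE.
Qed.

Lemma gammaV_dvd n (k : 'cV[int]_n) j : (gammaV k %| k j ord0)%Z.
Proof. by have := dvdzz (gammaV k); rewrite dvdz_gammaV => /forallP. Qed.

Lemma gammaV_ge0 n (k : 'cV[int]_n) : 0 <= gammaV k.
Proof. by rewrite /gammaV; elim/big_rec: _ => // i x _ _; apply: le0z_nat. Qed.

Lemma gammaV_dvd_mulmx m n (M : 'M[int]_(m, n)) (k : 'cV[int]_n) :
  (gammaV k %| gammaV (M *m k))%Z.
Proof.
rewrite dvdz_gammaV; apply/forallP => j; rewrite mxE.
by apply: rpred_sum => l _; apply/dvdz_mull/gammaV_dvd.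
Qed.

Lemma gammaV_unitmx n (M : 'M[int]_n) (k : 'cV[int]_n) :
  M \in unitmx -> gammaV (M *m k) = gammaV k.
Proof.
move=> Mu; have dvd_k_Mk := gammaV_dvd_mulmx M k.
have := gammaV_dvd_mulmx (invmx M) (M *m k); rewrite mulKmx // => dvd_Mk_k.
rewrite -(gez0_abs (gammaV_ge0 k)) -(gez0_abs (gammaV_ge0 (M *m k))).
by congr Posz; apply/eqP; rewrite eqn_dvd; apply/andP.
Qed.

Definition primitive_part n (k : 'cV[int]_n) : 'cV[int]_n :=
  \col_j (k j ord0 %/ gammaV k)%Z.

Lemma scale_primitive_part n (k : 'cV[int]_n) : gammaV k *: primitive_part k = k.
Proof. by apply/matrixP => j l; rewrite !mxE (ord1 l) mulrC divzK ?gammaV_dvd. Qed.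

Lemma primitive_part_unitmx n (M : 'M[int]_n) (k : 'cV[int]_n) :
  M \in unitmx -> primitive_part (M *m k) = M *m primitive_part k.
Proof.
move=> Mu; have [g0|gn0] := eqVneq (gammaV k) 0.
  have -> : primitive_part k = 0 by apply/matrixP => j l; rewrite !mxE g0 divz0.
  by apply/matrixP => j l; rewrite mulmx0 !mxE gammaV_unitmx // g0 divz0.
apply/matrixP => j l; rewrite (ord1 l) mxE gammaV_unitmx //.
by rewrite -{1}(scale_primitive_part k) -scalemxAr mxE mulKz.
Qed.

Definition oddz (x : int) : bool := (x %% 2)%Z == 1.

Lemma oddzD x y : oddz (x + y) = oddz x (+) oddz y.
Proof.
have mod2 z : (z %% 2 = 0 \/ z %% 2 = 1)%Z.
  by have := modz_ge0 z (isT : 2 != 0 :> int); have := ltz_mod z (isT : 2 != 0 :> int); lia.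
by rewrite /oddz -modzDm; case: (mod2 x) => ->; case: (mod2 y) => ->.
Qed.

Lemma oddzN x : oddz (- x) = oddz x.
Proof. by have := oddzD x (- x); rewrite subrr; case: (oddz x); case: (oddz (- x)). Qed.

Lemma oddz_double x : oddz (x + x) = false.
Proof. by rewrite oddzD addbb. Qed.

Definition odd_count n (c : 'cV[int]_n) : nat := #|[set j | oddz (c j ord0)]|.

Lemma alphaVE n (k : 'cV[int]_n) : alphaV k = odd_count (primitive_part k).
Proof. by apply: eq_card => j; rewrite !inE mxE. Qed.

Lemma transvection_unitmx (R : comUnitRingType) n (u : 'cV[R]_n) (v : 'rV[R]_n) :
  v *m u = 0 -> 1%:M + u *m v \in unitmx.
Proof.
move=> vu0; suff /mulmx1_unit[] : (1%:M + u *m v) *m (1%:M - u *m v) = 1%:M by [].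
rewrite mulmxDl !mulmxBr !mul1mx mulmx1 -[u *m v *m _]mulmxA (mulmxA v) vu0.
by rewrite mul0mx mulmx0 subr0 subrK.
Qed.

Section FirstGenerator.
Variable n : nat.
Let u : 'cV[int]_n.+1 := const_mx 1 - delta_mx 0 0.
Let v : 'rV[int]_n.+1 := delta_mx 0 0.

Lemma sigma1_transvection : sigma n.+1 1 = 1%:M + u *m v.
Proof.
apply/matrixP => j l; rewrite !mxE big_ord1 !mxE /= eqxx andbT.
rewrite -[(j : nat) != 0%N]/(j != 0) -[(l : nat) == 0%N]/(l == 0).
by case: (j == l); case: (j == 0); case: (l == 0).
Qed.

Lemma sigma1_unitmx : sigma n.+1 1 \in unitmx.
Proof.
rewrite sigma1_transvection transvection_unitmx // -rowE.
by apply/matrixP => ? ?; rewrite !mxE !ord1 subrr.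
Qed.

Lemma sigma1_mulmx (c : 'cV[int]_n.+1) j :
  (sigma n.+1 1 *m c) j 0 = c j 0 + (j != 0)%:R * c 0 0.
Proof.
rewrite sigma1_transvection mulmxDl mul1mx -mulmxA -rowE !mxE big_ord1 !mxE eqxx.
by case: (j == 0); rewrite ?subrr ?subr0.
Qed.

Lemma oddz_sigma1_mulmx (c : 'cV[int]_n.+1) j :
  oddz ((sigma n.+1 1 *m c) j 0) = oddz (c j 0) (+) (j != 0) && oddz (c 0 0).
Proof. by rewrite sigma1_mulmx oddzD; case: (j != 0); rewrite ?mul1r ?mul0r. Qed.

Lemma odd_count_sigma1_even (c : 'cV[int]_n.+1) :
  ~~ oddz (c 0 0) -> odd_count (sigma n.+1 1 *m c) = odd_count c.
Proof.
by move/negbTE=> c0; apply: eq_card => j; rewrite !inE oddz_sigma1_mulmx c0 andbF addbF.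
Qed.

Lemma odd_count_sigma1_odd (c : 'cV[int]_n.+1) :
  oddz (c 0 0) -> (odd_count (sigma n.+1 1 *m c) + odd_count c = n.+2)%N.
Proof.
move=> c0; rewrite /odd_count -cardsUI.
have -> : [set j | oddz ((sigma n.+1 1 *m c) j 0)] :|: [set j | oddz (c j 0)] = setT.
  apply/setP => j; rewrite !inE oddz_sigma1_mulmx c0 andbT.
  by case: (eqVneq j 0) => [->|_]; rewrite ?c0 //; case: (oddz _).
have -> : [set j | oddz ((sigma n.+1 1 *m c) j 0)] :&: [set j | oddz (c j 0)] = [set 0].
  apply/setP => j; rewrite !inE oddz_sigma1_mulmx c0 andbT.
  by case: (eqVneq j 0) => [->|_]; rewrite ?c0 //; case: (oddz _).
by rewrite cards1 cardsT card_ord addn1.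
Qed.

End FirstGenerator.

Section AdjacentGenerator.
Variables (n i : nat) (lt_i1n : (i.+1 < n)%N).
Let a : 'I_n := Ordinal (ltnW lt_i1n).
Let b : 'I_n := Ordinal lt_i1n.
Let u : 'cV[int]_n := delta_mx a 0 + delta_mx b 0.
Let v : 'rV[int]_n := delta_mx 0 a - delta_mx 0 b.

Let eq_abF : (a == b) = false.
Proof. by rewrite -val_eqE /= ltn_eqF. Qed.

Lemma sigma_adjacent_transvection : sigma n i.+2 = 1%:M + u *m v.
Proof.
apply/matrixP => j l; rewrite !mxE big_ord1 !mxE /= !eqxx !andbT !subSS !subn0.
rewrite -[(j : nat) == i]/(j == a) -[(j : nat) == i.+1]/(j == b).
rewrite -[(l : nat) == i]/(l == a) -[(l : nat) == i.+1]/(l == b).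
have eq_baF : (b == a) = false by rewrite eq_sym.
have [->|ja] := eqVneq j a; last have [->|jb] := eqVneq j b.
all: have [->|la] := eqVneq l a.
all: try have [->|lb] := eqVneq l b.
all: rewrite ?eq_abF ?eq_baF ?eqxx //= ?add0r ?mul0r ?addr0 ?natz //.
  by case: (l == b).
by rewrite mul1r eq_sym subrr.
Qed.

Lemma sigma_adjacent_unitmx : sigma n i.+2 \in unitmx.
Proof.
rewrite sigma_adjacent_transvection transvection_unitmx //.
rewrite /u /v mulmxDr !mulmxBl !mul_delta_mx !mul_delta_mx_0 ?eq_abF 1?eq_sym ?eq_abF //.
by rewrite subr0 add0r subrr.
Qed.

Lemma oddz_sigma_adjacent_mulmx (c : 'cV[int]_n) j :
  oddz ((sigma n i.+2 *m c) j 0) = oddz (c (tperm a b j) 0).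
Proof.
rewrite sigma_adjacent_transvection mulmxDl mul1mx -mulmxA mulmxBl -!rowE.
rewrite !mxE big_ord1 !mxE !eqxx !andbT.
have [->|ja] := eqVneq j a; last have [->|jb] := eqVneq j b.
- by rewrite tpermL eq_abF addr0 mul1r addrA oddzD oddz_double oddzN.
- by rewrite tpermR add0r mul1r addrC subrK.
- by rewrite tpermD 1?eq_sym // addr0 mul0r addr0.
Qed.

Lemma odd_count_sigma_adjacent (c : 'cV[int]_n) :
  odd_count (sigma n i.+2 *m c) = odd_count c.
Proof.
rewrite /odd_count -[RHS](card_preimset _ (@perm_inj _ (tperm a b))).
by apply: eq_card => j; rewrite !inE oddz_sigma_adjacent_mulmx.
Qed.

End AdjacentGenerator.

Lemma sigma_unitmx n i : (1 <= i <= n)%N -> sigma n i \in unitmx.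
Proof.
case: n => [|n]; first lia.
case: i => [|[|i]] // hi; first exact: sigma1_unitmx.
by apply: sigma_adjacent_unitmx; rewrite ltnS.
Qed.

Lemma deltaV_sigma n i (k : 'cV[int]_n) :
  (1 <= i <= n)%N -> deltaV (sigma n i *m k) = deltaV k.
Proof.
move=> hi; rewrite /deltaV !alphaVE primitive_part_unitmx ?sigma_unitmx //.
move: (primitive_part k) => c {k}.
case: n hi c => [|n] hi c; first lia.
case: i hi => [|[|i]] // hi.
  have [c0|c0] := boolP (oddz (c 0 0)); last by rewrite odd_count_sigma1_even.
  by have := odd_count_sigma1_odd c0; lia.
by rewrite odd_count_sigma_adjacent.
Qed.

Lemma inG_preserves (T : Type) n (f : 'cV[int]_n -> T) :
  (forall i k, (1 <= i <= n)%N -> f (sigma n i *m k) = f k) ->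
  forall g k, inG g -> f (g *m k) = f k.
Proof.
move=> f_sigma g k hg; elim: hg k => [|i g' hi _ IH|i g' hi _ IH] k.
- by rewrite mul1mx.
- by rewrite -mulmxA f_sigma.
by rewrite -mulmxA -(IH k) -{2}(mulKVmx (sigma_unitmx hi) (g' *m k)) f_sigma.
Qed.

Theorem mainTheorem4 (s : nat) (hs : (1 <= s)%N)
    (g : 'M[int]_(2 * s)) (hg : inG g) (k : 'cV[int]_(2 * s)) (hk : k != 0) :
  deltaV (g *m k) = deltaV k /\ gammaV (g *m k) = gammaV k.
Proof.
split; apply: inG_preserves hg => i c hi; first exact: deltaV_sigma.
exact/gammaV_unitmx/sigma_unitmx.
Qed.
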